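(* Assume the setting and hypotheses of the following: $(y_i)_{i\ge1}$ is a real sequence, $\mathbf{y}=(y_1,\dots,y_n)$, $\overline{\mathbf{y}}_n=\frac1n\sum_{i\le n}y_i\to\overline{y}_\infty\ne0$; $q=q(n)$, $p=p(n)>0$, $T=T(n)\ge1$ integers with $\log n\le qn\le\sqrt n$ and $T=o(qn)$; $\mathbf{A}$ is the adjacency matrix of $G(n,q)$. Suppose moreover $npq\ge1+\epsilon$ for some fixed $\epsilon>0$ (i.e. $p\,\mathbb{E}[\lambda_1]\ge1+\epsilon$, using $\mathbb{E}[\lambda_1]=nq$). Fix an index $i$. Then: (a) if $T\le(1-\delta)\frac{\log n}{\log(npq)}$ for some fixed $\delta>0$, then $\mathbb{E}[\mathrm{CC}(\mathbf{A},p,T,\mathbf{y})_i]=o(n)$; (b) if $T\ge(1+\delta)\frac{\log n}{\log(npq)}$ for some fixed $\delta>0$, then $|\mathbb{E}[\mathrm{CC}(\mathbf{A},p,T,\mathbf{y})_i]|=\Omega(n)$, i.e. it is at least $cn$ for some $c>0$ and all large $n$.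
   Context: Contextual centrality: $\mathrm{CC}(\mathbf{A},p,T,\mathbf{y})=\sum_{t=0}^{T}(p\mathbf{A})^t\mathbf{y}$. $G(n,q)$ is the Erdős–Rényi random graph: its adjacency matrix is a random symmetric $n\times n$ matrix with zero diagonal and independent Bernoulli($q$) entries above the diagonal. $\log$ is the natural logarithm; $p,q,T$ depend on $n$ and asymptotics are as $n\to\infty$. *)

From Stdlib Require Import Reals Lra Lia Arith.
Open Scope R_scope.

Fixpoint rsum (n : nat) (f : nat -> R) : R :=
  match n with O => 0 | S k => rsum k f + f k end.

(* Expectation of f over m independent Bernoulli(q) bits g 0, ..., g (m-1)
   (bits with index >= m are set to false). *)
Fixpoint Ebern (q : R) (m : nat) (f : (nat -> bool) -> R) : R :=
  match m with
  | O => f (fun _ => false)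
  | S m' =>
      q * Ebern q m' (fun g => f (fun k => if Nat.eqb k m' then true else g k))
    + (1 - q) * Ebern q m' (fun g => f (fun k => if Nat.eqb k m' then false else g k))
  end.

(* index of the unordered pair {u,v}, u < v, among the n(n-1)/2 pairs *)
Definition pair_index (u v : nat) : nat := (v * (v - 1) / 2 + u)%nat.

Definition adj (g : nat -> bool) (u v : nat) : R :=
  if Nat.ltb u v then (if g (pair_index u v) then 1 else 0)
  else if Nat.ltb v u then (if g (pair_index v u) then 1 else 0)
  else 0.

(* expectation over G(n,q): the n(n-1)/2 above-diagonal entries are iid Bernoulli(q) *)
Definition E_Gnq (n : nat) (q : R) (f : (nat -> nat -> R) -> R) : R :=
  Ebern q (n * (n - 1) / 2) (fun g => f (adj g)).

Definition matvec (n : nat) (A : nat -> nat -> R) (x : nat -> R) : nat -> R :=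
  fun i => rsum n (fun j => A i j * x j).

Fixpoint powv (n : nat) (p : R) (A : nat -> nat -> R) (t : nat) (x : nat -> R)
  : nat -> R :=
  match t with
  | O => x
  | S t' => fun i => p * matvec n A (powv n p A t' x) i
  end.

Definition CC (n : nat) (A : nat -> nat -> R) (p : R) (T : nat) (y : nat -> R)
  : nat -> R :=
  fun i => rsum (S T) (fun t => powv n p A t y i).

(* the vector y = (y_1,...,y_n), 0-indexed: vertex k carries y_(k+1) *)
Definition yvec (y : nat -> R) : nat -> R := fun k => y (S k).

Definition ybar (y : nat -> R) (n : nat) : R := rsum n (fun k => y (S k)) / INR n.

From Stdlib Require Import Reals Lra Lia Arith List FunctionalExtensionality.
Import ListNotations.
Open Scope R_scope.

(* Expanding [(pA)^t y] over walks, [E[CC_i] = sum_t p^t sum_j W_t(i,j) y_j], where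
   [W_t(i,j)] is the expected number of length-[t] walks from [i] to [j] in G(n, q).
   Relabelling the vertices other than [i] shows that [W_t(i,j)] does not depend on
   [j <> i], hence [E[CC_i] = mu X + (y_i - mu) R] with [mu] the mean of [y] off [i]
   (which tends to [ybar_oo <> 0]), [X = sum_t p^t sum_j W_t(i,j)] and
   [R = sum_t p^t W_t(i,i)].  Comparing fresh and revisited vertices at each step gives
   [((n - T) q)^t <= sum_j W_t(i,j) <= (n q + T)^t] and [R <= 1 + X / (q (n - T))].
   As [T = o(n q)], [X] is [(n p q)^T] up to a factor [n^(o(1))] (times [T + 1]):
   below the threshold [T = log n / log (n p q)] this is [n^(1 - delta/2)] at most,
   above it at least [3n/4], while [R] stays negligible against [X / log n]. *)

Definition indic (b : bool) : R := if b then 1 else 0.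

Lemma rsum_ext n f g : (forall k, (k < n)%nat -> f k = g k) -> rsum n f = rsum n g.
Proof.
  induction n; intros H; simpl; auto.
  rewrite IHn by (intros; apply H; lia). rewrite H by lia; auto.
Qed.

Lemma rsum_add n f g : rsum n (fun k => f k + g k) = rsum n f + rsum n g.
Proof. induction n; simpl; [lra|]. rewrite IHn; lra. Qed.

Lemma rsum_scal n c f : rsum n (fun k => c * f k) = c * rsum n f.
Proof. induction n; simpl; [lra|]. rewrite IHn; lra. Qed.

Lemma rsum_const n c : rsum n (fun _ => c) = INR n * c.
Proof. induction n; simpl rsum; [simpl; lra|]. rewrite IHn, S_INR; lra. Qed.

Lemma rsum_le n f g : (forall k, (k < n)%nat -> f k <= g k) -> rsum n f <= rsum n g.
Proof.
  induction n; intros H; simpl; [lra|].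
  assert (rsum n f <= rsum n g) by (apply IHn; intros; apply H; lia).
  specialize (H n ltac:(lia)). lra.
Qed.

Lemma rsum_nonneg n f : (forall k, (k < n)%nat -> 0 <= f k) -> 0 <= rsum n f.
Proof. intros H. rewrite <- (Rmult_0_r (INR n)), <- rsum_const. apply rsum_le; auto. Qed.

Lemma rsum_last_le T f : (forall k, (k < S T)%nat -> 0 <= f k) -> f T <= rsum (S T) f.
Proof.
  intros H. simpl. assert (0 <= rsum T f) by (apply rsum_nonneg; intros; apply H; lia). lra.
Qed.

Lemma rsum_Sl T f : rsum (S T) f = f 0%nat + rsum T (fun t => f (S t)).
Proof.
  induction T; [simpl; lra|].
  change (rsum (S (S T)) f) with (rsum (S T) f + f (S T)). rewrite IHT. simpl. lra.
Qed.

Lemma rsum_update n f i c : (i < n)%nat ->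
  rsum n (fun k => if Nat.eqb k i then c else f k) = rsum n f - f i + c.
Proof.
  induction n; intros Hi; [lia|]. simpl. destruct (Nat.eqb_spec n i) as [->|Hne].
  - rewrite (rsum_ext _ _ f); [lra|].
    intros k Hk. destruct (Nat.eqb_spec k i); [lia|auto].
  - rewrite IHn by lia. lra.
Qed.

Lemma rsum_indic_eq n f i : (i < n)%nat ->
  rsum n (fun k => f k * indic (Nat.eqb k i)) = f i.
Proof.
  intros Hi. rewrite (rsum_ext _ _ (fun k => if Nat.eqb k i then f i else 0)).
  - rewrite rsum_update, rsum_const by auto. simpl. lra.
  - intros k _. unfold indic. destruct (Nat.eqb_spec k i); subst; lra.
Qed.

Lemma rsum_indic_eq_le1 n a : rsum n (fun v => indic (Nat.eqb v a)) <= 1.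
Proof.
  destruct (Nat.lt_ge_cases a n).
  - rewrite (rsum_ext _ _ (fun v => 1 * indic (Nat.eqb v a))) by (intros; lra).
    rewrite rsum_indic_eq; auto. lra.
  - rewrite (rsum_ext _ _ (fun _ => 0)), rsum_const; [lra|].
    intros k Hk. destruct (Nat.eqb_spec k a); [lia|auto].
Qed.


Definition transpose (j j' v : nat) : nat :=
  if Nat.eqb v j then j' else if Nat.eqb v j' then j else v.

Lemma transposeK j j' v : transpose j j' (transpose j j' v) = v.
Proof.
  unfold transpose.
  destruct (Nat.eqb_spec v j) as [->|H1].
  - rewrite Nat.eqb_refl. destruct (Nat.eqb_spec j' j); auto.
  - destruct (Nat.eqb_spec v j') as [->|H2].
    + rewrite Nat.eqb_refl. auto.
    + destruct (Nat.eqb_spec v j), (Nat.eqb_spec v j'); auto; lia.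
Qed.

Lemma transpose_inj j j' a b : transpose j j' a = transpose j j' b -> a = b.
Proof. intros H. rewrite <- (transposeK j j' a), <- (transposeK j j' b), H; auto. Qed.

Lemma transpose_eqb j j' a b : Nat.eqb (transpose j j' a) (transpose j j' b) = Nat.eqb a b.
Proof.
  destruct (Nat.eqb_spec a b) as [->|Hne]; [apply Nat.eqb_refl|].
  apply Nat.eqb_neq. intros E. apply Hne, (transpose_inj j j'), E.
Qed.

Lemma transpose_lt j j' n v : (j < n)%nat -> (j' < n)%nat -> (v < n)%nat ->
  (transpose j j' v < n)%nat.
Proof. unfold transpose; intros. destruct (Nat.eqb v j), (Nat.eqb v j'); auto. Qed.

Lemma transpose_r j j' : transpose j j' j' = j.
Proof. unfold transpose. rewrite Nat.eqb_refl. destruct (Nat.eqb_spec j' j); auto. Qed.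

Lemma transpose_fix j j' v : v <> j -> v <> j' -> transpose j j' v = v.
Proof.
  unfold transpose; intros. destruct (Nat.eqb_spec v j), (Nat.eqb_spec v j'); auto; lia.
Qed.

Lemma rsum_transpose n f j j' : (j < n)%nat -> (j' < n)%nat ->
  rsum n f = rsum n (fun v => f (transpose j j' v)).
Proof.
  intros Hj Hj'. destruct (Nat.eq_dec j j') as [<-|Hne].
  { apply rsum_ext. intros k _. unfold transpose.
    destruct (Nat.eqb_spec k j); subst; auto. }
  set (h := fun v => if Nat.eqb v j then 0 else if Nat.eqb v j' then 0 else f v).
  assert (Hjj' : Nat.eqb j j' = false) by (apply Nat.eqb_neq; auto).
  assert (Hj'j : Nat.eqb j' j = false) by (apply Nat.eqb_neq; auto).
  assert (E1 : rsum n f = rsum n h + f j + f j').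
  { unfold h. rewrite rsum_update by auto.
    rewrite (rsum_update n f j' 0) by auto. rewrite Hjj'. lra. }
  assert (E2 : rsum n (fun v => f (transpose j j' v)) = rsum n h + f j' + f j).
  { rewrite (rsum_ext _ _ (fun v => if Nat.eqb v j then f j'
                                 else if Nat.eqb v j' then f j else h v)).
    - rewrite rsum_update, rsum_update by auto. unfold h. rewrite !Nat.eqb_refl, Hjj', Hj'j. lra.
    - intros k _. unfold transpose, h.
      destruct (Nat.eqb_spec k j); auto. destruct (Nat.eqb_spec k j'); auto. }
  lra.
Qed.


(** * Independent Bernoulli bits *)

Lemma Ebern_ext q m f h : (forall g, f g = h g) -> Ebern q m f = Ebern q m h.
Proof. intros H. replace f with h by (symmetry; apply functional_extensionality; auto). auto. Qed.

Lemma Ebern_add q m f h : Ebern q m (fun g => f g + h g) = Ebern q m f + Ebern q m h.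
Proof.
  revert f h; induction m; intros f h; simpl; auto.
  rewrite (IHm (fun g => f _) (fun g => h _)), (IHm (fun g => f _) (fun g => h _)). lra.
Qed.

Lemma Ebern_scal q m c f : Ebern q m (fun g => c * f g) = c * Ebern q m f.
Proof.
  revert f; induction m; intros f; simpl; auto.
  rewrite (IHm (fun g => f _)), (IHm (fun g => f _)). lra.
Qed.

Lemma Ebern_const q m c : Ebern q m (fun _ => c) = c.
Proof. induction m; simpl; auto. rewrite IHm. lra. Qed.

Lemma Ebern_rsum q m n F :
  Ebern q m (fun g => rsum n (fun v => F g v)) = rsum n (fun v => Ebern q m (fun g => F g v)).
Proof. induction n; simpl; [apply Ebern_const|]. rewrite Ebern_add, IHn. auto. Qed.

Lemma Ebern_le q m f h : 0 <= q <= 1 -> (forall g, f g <= h g) -> Ebern q m f <= Ebern q m h.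
Proof.
  intros Hq; revert f h; induction m; intros f h H; simpl; auto.
  assert (Ebern q m (fun g => f (fun k => if Nat.eqb k m then true else g k)) <=
          Ebern q m (fun g => h (fun k => if Nat.eqb k m then true else g k))) by (apply IHm; auto).
  assert (Ebern q m (fun g => f (fun k => if Nat.eqb k m then false else g k)) <=
          Ebern q m (fun g => h (fun k => if Nat.eqb k m then false else g k))) by (apply IHm; auto).
  nra.
Qed.

Lemma Ebern_nonneg q m f : 0 <= q <= 1 -> (forall g, 0 <= f g) -> 0 <= Ebern q m f.
Proof. intros Hq H. rewrite <- (Ebern_const q m 0). apply Ebern_le; auto. Qed.

Lemma Ebern_indep_bit q m b X : (b < m)%nat ->
  (forall g g', (forall k, k <> b -> g k = g' k) -> X g = X g') ->
  Ebern q m (fun g => X g * indic (g b)) = q * Ebern q m X.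
Proof.
  revert X; induction m; intros X Hb HX; [lia|]. simpl.
  destruct (Nat.eq_dec b m) as [->|Hne].
  - rewrite Nat.eqb_refl. unfold indic.
    rewrite (Ebern_ext q m (fun g => X _ * 0) (fun _ => 0)), Ebern_const by (intros; lra).
    rewrite (Ebern_ext q m (fun g => X _ * 1) (fun g => X (fun k => if Nat.eqb k m then true else g k)))
      by (intros; lra).
    rewrite (Ebern_ext q m (fun g => X (fun k => if Nat.eqb k m then false else g k))
                           (fun g => X (fun k => if Nat.eqb k m then true else g k))); [lra|].
    intros g. apply HX. intros k Hk. destruct (Nat.eqb_spec k m); [lia|auto].
  - assert (Hbm : Nat.eqb b m = false) by (apply Nat.eqb_neq; auto). rewrite Hbm.
    rewrite (IHm (fun g => X (fun k => if Nat.eqb k m then true else g k))),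
            (IHm (fun g => X (fun k => if Nat.eqb k m then false else g k))); [lra|lia| |lia|];
      intros g g' H; apply HX; intros k Hk; destruct (Nat.eqb k m); auto.
Qed.

(** * Walks in G(n, q) *)

Definition tri (v : nat) : nat := (v * (v - 1) / 2)%nat.

Lemma tri_S v : tri (S v) = (tri v + v)%nat.
Proof.
  unfold tri. replace (S v * (S v - 1))%nat with (v * (v - 1) + v * 2)%nat.
  - rewrite Nat.div_add by lia. auto.
  - destruct v; simpl; nia.
Qed.

Lemma tri_add_le v v' : (v < v')%nat -> (tri v + v <= tri v')%nat.
Proof.
  induction v'; intros H; [lia|]. rewrite tri_S.
  destruct (Nat.eq_dec v v'); [subst; lia|].
  assert (tri v + v <= tri v')%nat by (apply IHv'; lia). lia.
Qed.

Lemma pair_index_inj u v u' v' : (u < v)%nat -> (u' < v')%nat ->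
  pair_index u v = pair_index u' v' -> u = u' /\ v = v'.
Proof.
  change (pair_index ?a ?b) with (tri b + a)%nat. intros H1 H2 E.
  destruct (Nat.lt_total v v') as [Hl|[<-|Hl]]; try pose proof (tri_add_le _ _ Hl); lia.
Qed.

Lemma pair_index_lt u v n : (u < v)%nat -> (v < n)%nat -> (pair_index u v < tri n)%nat.
Proof. change (pair_index u v) with (tri v + u)%nat. intros. pose proof (tri_add_le _ _ H0). lia. Qed.

Definition edge_index (u v : nat) : nat :=
  if Nat.ltb u v then pair_index u v else pair_index v u.

Lemma edge_index_inj x y u v : x <> y -> u <> v -> edge_index x y = edge_index u v ->
  (x = u /\ y = v) \/ (x = v /\ y = u).
Proof.
  unfold edge_index; intros.
  destruct (Nat.ltb_spec x y), (Nat.ltb_spec u v);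
    match goal with H : pair_index _ _ = pair_index _ _ |- _ => apply pair_index_inj in H; lia end.
Qed.

Lemma edge_index_lt u v n : u <> v -> (u < n)%nat -> (v < n)%nat -> (edge_index u v < tri n)%nat.
Proof. unfold edge_index; intros. destruct (Nat.ltb_spec u v); apply pair_index_lt; lia. Qed.

Lemma adj_edge_index g u v : u <> v -> adj g u v = indic (g (edge_index u v)).
Proof.
  intros H. unfold adj, edge_index, indic.
  destruct (Nat.ltb_spec u v); auto. destruct (Nat.ltb_spec v u); [auto|lia].
Qed.

Lemma adj_diag g u : adj g u u = 0.
Proof. unfold adj. rewrite Nat.ltb_irrefl. auto. Qed.

Lemma adj_01 g u v : adj g u v = 0 \/ adj g u v = 1.
Proof. unfold adj. destruct (Nat.ltb u v), (Nat.ltb v u); try destruct (g _); auto. Qed.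

(* A walk is the list of its vertices. *)
Fixpoint walk_weight (A : nat -> nat -> R) (w : list nat) : R :=
  match w with
  | x :: (y :: _) as r => A x y * walk_weight A r
  | _ => 1
  end.

Fixpoint walk_uses (a b : nat) (w : list nat) : bool :=
  match w with
  | x :: (y :: _) as r =>
      ((Nat.eqb x a && Nat.eqb y b) || (Nat.eqb x b && Nat.eqb y a)) || walk_uses a b r
  | _ => false
  end.

Definition visits (v : nat) (w : list nat) : bool := existsb (Nat.eqb v) w.

Lemma walk_weight_snoc A w v : w <> nil ->
  walk_weight A (w ++ [v]) = walk_weight A w * A (last w 0%nat) v.
Proof.
  induction w as [|x [|y r] IH]; intros H; [congruence|simpl; lra|].
  change (A x y * walk_weight A ((y :: r) ++ [v])
          = A x y * walk_weight A (y :: r) * A (last (y :: r) 0%nat) v).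
  rewrite IH by congruence. lra.
Qed.

Lemma walk_uses_visits a b w : walk_uses a b w = true -> visits b w = true.
Proof.
  unfold visits. induction w as [|x [|y r] IH]; simpl; try discriminate.
  intros H. apply Bool.orb_true_iff in H as [H|H].
  - apply Bool.orb_true_iff in H as [H|H]; apply andb_prop in H as [H1 H2];
      apply Nat.eqb_eq in H1, H2; subst; rewrite Nat.eqb_refl, ?Bool.orb_true_r; auto.
  - simpl in IH. rewrite IH by auto. rewrite !Bool.orb_true_r. auto.
Qed.

Lemma walk_uses_map f a b w : (forall x y, f x = f y -> x = y) ->
  walk_uses (f a) (f b) (map f w) = walk_uses a b w.
Proof.
  intros Hf. assert (E : forall x y, Nat.eqb (f x) (f y) = Nat.eqb x y).
  { intros x y. destruct (Nat.eqb_spec x y) as [->|Hne]; [apply Nat.eqb_refl|].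
    apply Nat.eqb_neq. intros E. apply Hne, Hf, E. }
  induction w as [|x [|y r] IH]; auto.
  change ((((Nat.eqb (f x) (f a) && Nat.eqb (f y) (f b)) || (Nat.eqb (f x) (f b) && Nat.eqb (f y) (f a)))
           || walk_uses (f a) (f b) (map f (y :: r)))%bool = walk_uses a b (x :: y :: r)).
  rewrite IH, !E. auto.
Qed.

Lemma walk_weight_absent_edge g a b w : walk_uses a b w = true -> a <> b ->
  g (edge_index a b) = false -> walk_weight (adj g) w = 0.
Proof.
  induction w as [|x [|y r] IH]; intros H Hab Hg; try discriminate H.
  change (adj g x y * walk_weight (adj g) (y :: r) = 0).
  apply Bool.orb_true_iff in H as [H|H].
  - assert (adj g x y = 0) as ->; [|lra].
    apply Bool.orb_true_iff in H as [H|H]; apply andb_prop in H as [H1 H2];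
      apply Nat.eqb_eq in H1, H2; subst; rewrite adj_edge_index by auto; unfold indic.
    + rewrite Hg. auto.
    + unfold edge_index in *. destruct (Nat.ltb_spec a b), (Nat.ltb_spec b a); try lia; rewrite Hg; auto.
  - rewrite IH by auto. lra.
Qed.

Lemma walk_weight_indep_edge g g' u v w : walk_uses u v w = false -> u <> v ->
  (forall k, k <> edge_index u v -> g k = g' k) -> walk_weight (adj g) w = walk_weight (adj g') w.
Proof.
  intros H Huv Hg. induction w as [|x [|y r] IH]; auto.
  apply Bool.orb_false_iff in H as [H0 H].
  change (adj g x y * walk_weight (adj g) (y :: r) = adj g' x y * walk_weight (adj g') (y :: r)).
  rewrite IH by auto. f_equal.
  destruct (Nat.eq_dec x y) as [<-|Hxy]; [rewrite !adj_diag; auto|].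
  rewrite !adj_edge_index by auto. f_equal. apply Hg.
  intros E. apply edge_index_inj in E as [[-> ->]|[-> ->]]; auto;
    rewrite !Nat.eqb_refl, ?Bool.orb_true_r in H0; discriminate.
Qed.

Lemma walk_weight_nonneg g w : 0 <= walk_weight (adj g) w.
Proof.
  induction w as [|x [|y r] IH]; simpl; try lra.
  destruct (adj_01 g x y) as [E|E]; rewrite E; simpl in IH; lra.
Qed.

Lemma last_In (w : list nat) d : w <> nil -> In (last w d) w.
Proof.
  intros Hw. rewrite (app_removelast_last d Hw) at 2. apply in_or_app. right. left. auto.
Qed.

Lemma last_map (f : nat -> nat) (w : list nat) d : w <> nil -> last (map f w) d = f (last w d).
Proof.
  intros Hw. rewrite (app_removelast_last d Hw) at 1. rewrite map_app. apply last_last.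
Qed.

Definition vertices_lt (n : nat) (w : list nat) : Prop := Forall (fun v => (v < n)%nat) w.

Lemma vertices_lt_snoc n w v : vertices_lt n w -> (v < n)%nat -> vertices_lt n (w ++ [v]).
Proof. intros. apply Forall_app; split; auto. Qed.

Lemma vertices_lt_last n w : w <> nil -> vertices_lt n w -> (last w 0%nat < n)%nat.
Proof. intros Hw H. unfold vertices_lt in H. rewrite Forall_forall in H. apply H, last_In, Hw. Qed.

(* The probability that every edge traversed by [w] is present in G(n, q). *)
Definition walk_prob (n : nat) (q : R) (w : list nat) : R :=
  Ebern q (tri n) (fun g => walk_weight (adj g) w).

Section WalkProb.
Variables (n : nat) (q : R).
Hypothesis Hq : 0 <= q <= 1.

Lemma walk_prob_single x : walk_prob n q [x] = 1.
Proof. unfold walk_prob; simpl walk_weight. apply Ebern_const. Qed.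

Lemma walk_prob_nonneg w : 0 <= walk_prob n q w.
Proof. apply Ebern_nonneg; auto using walk_weight_nonneg. Qed.

Lemma walk_prob_snoc w v : w <> nil -> vertices_lt n w -> (v < n)%nat ->
  walk_prob n q (w ++ [v]) =
    if Nat.eqb (last w 0%nat) v then 0
    else if walk_uses (last w 0%nat) v w then walk_prob n q w else q * walk_prob n q w.
Proof.
  intros Hw Hwn Hv. unfold walk_prob.
  rewrite (Ebern_ext _ _ _ (fun g => walk_weight (adj g) w * adj g (last w 0%nat) v))
    by (intros; apply walk_weight_snoc; auto).
  pose proof (vertices_lt_last n w Hw Hwn) as Hu. set (u := last w 0%nat) in *.
  destruct (Nat.eqb_spec u v) as [<-|Huv].
  { rewrite (Ebern_ext _ _ _ (fun g => 0)) by (intros; rewrite adj_diag; lra). apply Ebern_const. }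
  rewrite (Ebern_ext _ _ _ (fun g => walk_weight (adj g) w * indic (g (edge_index u v))))
    by (intros; rewrite adj_edge_index; auto).
  destruct (walk_uses u v w) eqn:Huses.
  - apply Ebern_ext. intros g. unfold indic. destruct (g (edge_index u v)) eqn:Hg; [lra|].
    rewrite (walk_weight_absent_edge g u v w); auto. lra.
  - apply Ebern_indep_bit; [apply edge_index_lt; auto|].
    intros g g' H. apply walk_weight_indep_edge with u v; auto.
Qed.

Lemma walk_prob_snoc_le w v : w <> nil -> vertices_lt n w -> (v < n)%nat ->
  walk_prob n q (w ++ [v]) <= walk_prob n q w.
Proof.
  intros. rewrite walk_prob_snoc by auto. pose proof (walk_prob_nonneg w).
  destruct (Nat.eqb _ _); [lra|]. destruct (walk_uses _ _ _); nra.
Qed.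

Lemma walk_prob_snoc_fresh w v : w <> nil -> vertices_lt n w -> (v < n)%nat ->
  visits v w = false -> walk_prob n q (w ++ [v]) = q * walk_prob n q w.
Proof.
  intros Hw Hwn Hv Hfresh. rewrite walk_prob_snoc by auto.
  destruct (Nat.eqb_spec (last w 0%nat) v) as [E|_].
  - assert (visits v w = true); [|congruence].
    apply existsb_exists. exists v. rewrite Nat.eqb_refl. rewrite <- E at 1. auto using last_In.
  - destruct (walk_uses _ _ _) eqn:E; auto.
    apply walk_uses_visits in E. congruence.
Qed.

Lemma walk_prob_transpose j j' w : (j < n)%nat -> (j' < n)%nat -> vertices_lt n w ->
  walk_prob n q (map (transpose j j') w) = walk_prob n q w.
Proof.
  intros Hj Hj'. induction w as [|v l IH] using rev_ind; intros Hw; auto.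
  apply Forall_app in Hw as [Hl Hv]. inversion Hv; subst.
  destruct l as [|x l']; [simpl; rewrite !walk_prob_single; auto|].
  assert (Hl' : vertices_lt n (map (transpose j j') (x :: l'))).
  { apply Forall_map. eapply Forall_impl; [|exact Hl]. intros; apply transpose_lt; auto. }
  rewrite map_app. simpl map at 2.
  rewrite !walk_prob_snoc by (auto using transpose_lt; simpl; congruence).
  rewrite last_map by congruence. rewrite walk_uses_map by apply transpose_inj.
  rewrite transpose_eqb, IH by auto.
  auto.
Qed.

End WalkProb.

(** * Expected walk counts *)

(* [sum_walks n t F] sums [F l] over all lists [l] of [t] vertices below [n]. *)
Fixpoint sum_walks (n t : nat) (F : list nat -> R) : R :=
  match t with
  | O => F nil
  | S t' => sum_walks n t' (fun l => rsum n (fun v => F (l ++ [v])))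
  end.

Section SumWalks.
Variable n : nat.

Lemma sum_walks_ext t F G : (forall l, vertices_lt n l -> F l = G l) ->
  sum_walks n t F = sum_walks n t G.
Proof.
  revert F G; induction t; intros F G H; simpl; [apply H; constructor|].
  apply IHt. intros l Hl. apply rsum_ext. intros v Hv. apply H, vertices_lt_snoc; auto.
Qed.

Lemma sum_walks_le t F G : (forall l, vertices_lt n l -> length l = t -> F l <= G l) ->
  sum_walks n t F <= sum_walks n t G.
Proof.
  revert F G; induction t; intros F G H; simpl; [apply H; [constructor|auto]|].
  apply IHt. intros l Hl Hlen. apply rsum_le. intros v Hv.
  apply H; [apply vertices_lt_snoc; auto|]. rewrite length_app; simpl; lia.
Qed.

Lemma sum_walks_add t F G : sum_walks n t (fun l => F l + G l) = sum_walks n t F + sum_walks n t G.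
Proof.
  revert F G; induction t; intros F G; simpl; auto.
  rewrite <- IHt. apply sum_walks_ext. intros. apply rsum_add.
Qed.

Lemma sum_walks_scal t c F : sum_walks n t (fun l => c * F l) = c * sum_walks n t F.
Proof.
  revert F; induction t; intros F; simpl; auto.
  rewrite <- IHt. apply sum_walks_ext. intros. apply rsum_scal.
Qed.

Lemma sum_walks_zero t : sum_walks n t (fun _ => 0) = 0.
Proof. rewrite (sum_walks_ext t _ (fun l => 0 * 0)), sum_walks_scal by (intros; lra). lra. Qed.

Lemma sum_walks_rsum t m F :
  sum_walks n t (fun l => rsum m (fun j => F l j)) = rsum m (fun j => sum_walks n t (fun l => F l j)).
Proof. induction m; simpl; [apply sum_walks_zero|]. rewrite sum_walks_add, IHm. auto. Qed.

Lemma sum_walks_nonneg t F : (forall l, vertices_lt n l -> 0 <= F l) -> 0 <= sum_walks n t F.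
Proof. intros H. rewrite <- (sum_walks_zero t). apply sum_walks_le; auto. Qed.

Lemma Ebern_sum_walks q m t F :
  Ebern q m (fun g => sum_walks n t (fun l => F g l))
  = sum_walks n t (fun l => Ebern q m (fun g => F g l)).
Proof.
  revert F; induction t; intros F; simpl; auto.
  rewrite (IHt (fun g l => rsum n (fun v => F g (l ++ [v])))).
  apply sum_walks_ext. intros. apply Ebern_rsum.
Qed.

Lemma sum_walks_transpose t F j j' : (j < n)%nat -> (j' < n)%nat ->
  sum_walks n t F = sum_walks n t (fun l => F (map (transpose j j') l)).
Proof.
  intros Hj Hj'. revert F; induction t; intros F; simpl; auto.
  rewrite IHt. apply sum_walks_ext. intros l _.
  rewrite (rsum_transpose n _ j j') by auto. apply rsum_ext. intros v _.
  rewrite map_app. auto.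
Qed.

End SumWalks.

Lemma powv_S_inner n p A t x i :
  powv n p A (S t) x i = powv n p A t (fun u => p * matvec n A x u) i.
Proof.
  revert i; induction t; intros i; auto.
  change (powv n p A (S (S t)) x i) with (p * matvec n A (powv n p A (S t) x) i).
  replace (powv n p A (S t) x) with (powv n p A t (fun u => p * matvec n A x u))
    by (apply functional_extensionality; auto).
  auto.
Qed.

Lemma powv_sum_walks n p A t x i : powv n p A t x i =
  p ^ t * sum_walks n t (fun l => walk_weight A (i :: l) * x (last (i :: l) 0%nat)).
Proof.
  revert x; induction t; intros x; [simpl; lra|].
  rewrite powv_S_inner, IHt, <- tech_pow_Rmult, (Rmult_comm p (p ^ t)), Rmult_assoc.
  f_equal. rewrite <- sum_walks_scal. cbn [sum_walks].
  apply sum_walks_ext. intros l _.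
  unfold matvec. rewrite <- !rsum_scal. apply rsum_ext. intros v _.
  change (i :: l ++ [v]) with ((i :: l) ++ [v]).
  rewrite walk_weight_snoc, last_last by congruence. lra.
Qed.

Definition expected_walks (n : nat) (q : R) (i t : nat) (x : nat -> R) : R :=
  sum_walks n t (fun l => walk_prob n q (i :: l) * x (last (i :: l) 0%nat)).

Definition walks_to (n : nat) (q : R) (i t j : nat) : R :=
  expected_walks n q i t (fun v => indic (Nat.eqb v j)).

Definition walks_total (n : nat) (q : R) (i t : nat) : R :=
  expected_walks n q i t (fun _ => 1).

Lemma E_Gnq_CC n q p T x i : E_Gnq n q (fun A => CC n A p T x i) =
  rsum (S T) (fun t => p ^ t * expected_walks n q i t x).
Proof.
  unfold E_Gnq, CC. fold (tri n). rewrite Ebern_rsum. apply rsum_ext. intros t _.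
  rewrite (Ebern_ext _ _ _ (fun g => p ^ t * sum_walks n t
             (fun l => walk_weight (adj g) (i :: l) * x (last (i :: l) 0%nat))))
    by (intros; apply powv_sum_walks).
  rewrite Ebern_scal, Ebern_sum_walks. f_equal. apply sum_walks_ext. intros l _.
  unfold walk_prob. rewrite Rmult_comm, <- Ebern_scal. apply Ebern_ext. intros. lra.
Qed.

Section ExpectedWalks.
Variables (n : nat) (q : R) (i : nat).
Hypotheses (Hq : 0 <= q <= 1) (Hi : (i < n)%nat).

Lemma expected_walks_endpoint t x :
  expected_walks n q i t x = rsum n (fun j => walks_to n q i t j * x j).
Proof.
  unfold walks_to, expected_walks.
  rewrite (rsum_ext _ _ (fun j => sum_walks n t (fun l =>
             x j * (walk_prob n q (i :: l) * indic (Nat.eqb (last (i :: l) 0%nat) j)))))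
    by (intros; rewrite sum_walks_scal; lra).
  rewrite <- sum_walks_rsum. apply sum_walks_ext. intros l Hl.
  rewrite (rsum_ext _ _ (fun j =>
             (walk_prob n q (i :: l) * x j) * indic (Nat.eqb j (last (i :: l) 0%nat))))
    by (intros; rewrite Nat.eqb_sym; lra).
  rewrite rsum_indic_eq; auto. apply vertices_lt_last; [congruence|constructor; auto].
Qed.

(* G(n, q) is invariant under relabelling the vertices other than [i]. *)
Lemma walks_to_transpose t j j' : (j < n)%nat -> (j' < n)%nat -> j <> i -> j' <> i ->
  walks_to n q i t j = walks_to n q i t j'.
Proof.
  intros Hj Hj' Hji Hj'i. unfold walks_to, expected_walks.
  rewrite (sum_walks_transpose n t _ j j') by auto. apply sum_walks_ext. intros l Hl.
  replace (i :: map (transpose j j') l) with (map (transpose j j') (i :: l))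
    by (simpl; rewrite transpose_fix; auto).
  rewrite walk_prob_transpose, last_map by (auto; congruence || constructor; auto).
  rewrite <- (transpose_eqb j j' (last (i :: l) 0%nat) j'), transpose_r. auto.
Qed.

Lemma expected_walks_split t j0 x : (j0 < n)%nat -> j0 <> i ->
  expected_walks n q i t x = walks_to n q i t i * x i + walks_to n q i t j0 * (rsum n x - x i).
Proof.
  intros Hj0 Hne. rewrite expected_walks_endpoint.
  rewrite (rsum_ext _ _ (fun j => if Nat.eqb j i then walks_to n q i t i * x i
                                  else walks_to n q i t j0 * x j)).
  - rewrite rsum_update, rsum_scal by auto. lra.
  - intros j Hj. destruct (Nat.eqb_spec j i) as [->|Hji]; auto.
    rewrite (walks_to_transpose t j j0); auto.
Qed.

Lemma walks_total_split t j0 : (j0 < n)%nat -> j0 <> i ->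
  walks_total n q i t = walks_to n q i t i + walks_to n q i t j0 * (INR n - 1).
Proof. intros. unfold walks_total. rewrite (expected_walks_split t j0), rsum_const by auto. lra. Qed.

Lemma walks_to_nonneg t j : 0 <= walks_to n q i t j.
Proof.
  apply sum_walks_nonneg. intros. pose proof (walk_prob_nonneg n q Hq (i :: l)).
  unfold indic; destruct (Nat.eqb _ _); lra.
Qed.

Lemma walks_total_nonneg t : 0 <= walks_total n q i t.
Proof. apply sum_walks_nonneg. intros. pose proof (walk_prob_nonneg n q Hq (i :: l)). lra. Qed.

Lemma walks_to_self_0 : walks_to n q i 0 i = 1.
Proof.
  unfold walks_to, expected_walks. simpl. rewrite Nat.eqb_refl, walk_prob_single. unfold indic; lra.
Qed.

Lemma walks_total_0 : walks_total n q i 0 = 1.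
Proof. unfold walks_total, expected_walks. simpl. rewrite walk_prob_single. lra. Qed.

End ExpectedWalks.

Lemma rsum_visits_le n w : rsum n (fun v => indic (visits v w)) <= INR (length w).
Proof.
  induction w as [|a w IH].
  - rewrite (rsum_ext _ _ (fun _ => 0)), rsum_const by auto. simpl. lra.
  - change (length (a :: w)) with (S (length w)). rewrite S_INR.
    assert (rsum n (fun v => indic (visits v (a :: w)))
            <= rsum n (fun v => indic (Nat.eqb v a) + indic (visits v w))).
    { apply rsum_le. intros k _. unfold visits, indic. simpl.
      destruct (Nat.eqb k a), (existsb _ w); simpl; lra. }
    rewrite rsum_add in H. pose proof (rsum_indic_eq_le1 n a). lra.
Qed.

Section WalkGrowth.
Variables (n : nat) (q : R).
Hypothesis Hq : 0 <= q <= 1.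

(* Each of the [n - length w] fresh vertices extends [w] at cost [q]; the visited
   ones do so at cost at most [1]. *)
Lemma rsum_walk_prob_snoc_ge w : w <> nil -> vertices_lt n w ->
  (INR n - INR (length w)) * q * walk_prob n q w <= rsum n (fun v => walk_prob n q (w ++ [v])).
Proof.
  intros Hw Hwn. pose proof (walk_prob_nonneg n q Hq w).
  apply Rle_trans with
    (rsum n (fun v => q * walk_prob n q w + (- (q * walk_prob n q w)) * indic (visits v w))).
  - rewrite rsum_add, rsum_const, rsum_scal. pose proof (rsum_visits_le n w).
    assert (0 <= q * walk_prob n q w) by nra. nra.
  - apply rsum_le. intros v Hv. unfold indic. destruct (visits v w) eqn:E.
    + pose proof (walk_prob_nonneg n q Hq (w ++ [v])). lra.
    + rewrite walk_prob_snoc_fresh; auto. lra.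
Qed.

Lemma rsum_walk_prob_snoc_le w : w <> nil -> vertices_lt n w ->
  rsum n (fun v => walk_prob n q (w ++ [v])) <= (INR n * q + INR (length w)) * walk_prob n q w.
Proof.
  intros Hw Hwn. pose proof (walk_prob_nonneg n q Hq w).
  apply Rle_trans with (rsum n (fun v => q * walk_prob n q w + walk_prob n q w * indic (visits v w))).
  - apply rsum_le. intros v Hv. unfold indic. destruct (visits v w) eqn:E.
    + pose proof (walk_prob_snoc_le n q Hq w v Hw Hwn Hv). nra.
    + rewrite walk_prob_snoc_fresh; auto. lra.
  - rewrite rsum_add, rsum_const, rsum_scal. pose proof (rsum_visits_le n w). nra.
Qed.

Variable i : nat.
Hypothesis Hi : (i < n)%nat.

Lemma walks_total_S t : walks_total n q i (S t) =
  sum_walks n t (fun l => rsum n (fun v => walk_prob n q ((i :: l) ++ [v]))).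
Proof.
  unfold walks_total, expected_walks. cbn [sum_walks].
  apply sum_walks_ext. intros l _. apply rsum_ext. intros v _. apply Rmult_1_r.
Qed.

Lemma walks_total_S_ge t :
  (INR n - INR (S t)) * q * walks_total n q i t <= walks_total n q i (S t).
Proof.
  rewrite walks_total_S. unfold walks_total, expected_walks. rewrite <- sum_walks_scal.
  apply sum_walks_le. intros l Hl Hlen.
  pose proof (rsum_walk_prob_snoc_ge (i :: l) ltac:(congruence) ltac:(constructor; auto)).
  simpl length in H. rewrite Hlen in H. lra.
Qed.

Lemma walks_total_S_le t :
  walks_total n q i (S t) <= (INR n * q + INR (S t)) * walks_total n q i t.
Proof.
  rewrite walks_total_S. unfold walks_total, expected_walks. rewrite <- sum_walks_scal.
  apply sum_walks_le. intros l Hl Hlen.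
  pose proof (rsum_walk_prob_snoc_le (i :: l) ltac:(congruence) ltac:(constructor; auto)).
  simpl length in H. rewrite Hlen in H. lra.
Qed.

Lemma walks_to_self_S_le t : walks_to n q i (S t) i <= walks_total n q i t.
Proof.
  unfold walks_to, walks_total, expected_walks. cbn [sum_walks].
  apply sum_walks_le. intros l Hl _.
  rewrite (rsum_ext _ _ (fun v => walk_prob n q ((i :: l) ++ [v]) * indic (Nat.eqb v i)))
    by (intros; change (i :: l ++ [k]) with ((i :: l) ++ [k]); rewrite last_last; auto).
  rewrite rsum_indic_eq, Rmult_1_r by auto.
  apply walk_prob_snoc_le; auto; [congruence|constructor; auto].
Qed.

End WalkGrowth.

(** * The expected centrality at a fixed size *)

Section FixedSize.
Variables (n i T : nat) (q p : R) (x : nat -> R).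
Hypotheses (Hn : (2 <= n)%nat) (Hi : (i < n)%nat) (Hq : 0 < q <= 1) (Hp : 0 < p).

(* By symmetry every vertex other than [i] receives the same expected walk count,
   so only the mean of [x] over the other vertices matters. *)
Definition other_mean : R := (rsum n x - x i) / (INR n - 1).
Definition walk_gf : R := rsum (S T) (fun t => p ^ t * walks_total n q i t).
Definition return_gf : R := rsum (S T) (fun t => p ^ t * walks_to n q i t i).

Let Hq01 : 0 <= q <= 1. Proof. lra. Qed.

Let other_vertex : nat := if Nat.eqb i 0 then 1%nat else 0%nat.

Let other_vertex_spec : (other_vertex < n)%nat /\ other_vertex <> i.
Proof. unfold other_vertex. destruct (Nat.eqb_spec i 0); lia. Qed.

Lemma E_Gnq_CC_split : E_Gnq n q (fun A => CC n A p T x i) =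
  other_mean * walk_gf + (x i - other_mean) * return_gf.
Proof.
  destruct other_vertex_spec as [Hj Hji].
  assert (Hn1 : 1 < INR n) by (apply lt_1_INR; lia).
  rewrite E_Gnq_CC. unfold walk_gf, return_gf.
  rewrite <- !rsum_scal, <- rsum_add. apply rsum_ext. intros t _.
  rewrite (expected_walks_split n q i Hi t other_vertex),
    (walks_total_split n q i Hi t other_vertex)
    by auto.
  unfold other_mean. field. lra.
Qed.

Lemma walk_gf_nonneg : 0 <= walk_gf.
Proof.
  apply rsum_nonneg. intros t _. pose proof (walks_total_nonneg n q i Hq01 t).
  pose proof (pow_le p t ltac:(lra)). nra.
Qed.

Lemma return_gf_nonneg : 0 <= return_gf.
Proof.
  apply rsum_nonneg. intros t _. pose proof (walks_to_nonneg n q i Hq01 t i).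
  pose proof (pow_le p t ltac:(lra)). nra.
Qed.

Lemma return_gf_le_walk_gf : return_gf <= walk_gf.
Proof.
  destruct other_vertex_spec as [Hj Hji].
  assert (Hn1 : 1 < INR n) by (apply lt_1_INR; lia).
  apply rsum_le. intros t _. apply Rmult_le_compat_l; [apply pow_le; lra|].
  rewrite (walks_total_split n q i Hi t other_vertex) by auto.
  pose proof (walks_to_nonneg n q i Hq01 t other_vertex). nra.
Qed.

Lemma Rabs_E_Gnq_CC_le : Rabs (E_Gnq n q (fun A => CC n A p T x i)) <=
  (Rabs (x i - other_mean) + Rabs other_mean) * walk_gf.
Proof.
  rewrite E_Gnq_CC_split. pose proof walk_gf_nonneg. pose proof return_gf_nonneg.
  pose proof return_gf_le_walk_gf.
  pose proof (Rabs_triang (other_mean * walk_gf) ((x i - other_mean) * return_gf)).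
  rewrite !Rabs_mult, (Rabs_right walk_gf), (Rabs_right return_gf) in H2 by lra.
  pose proof (Rabs_pos (x i - other_mean)). pose proof (Rabs_pos other_mean). nra.
Qed.

Lemma Rabs_E_Gnq_CC_ge : Rabs other_mean * walk_gf - Rabs (x i - other_mean) * return_gf <=
  Rabs (E_Gnq n q (fun A => CC n A p T x i)).
Proof.
  rewrite E_Gnq_CC_split. pose proof walk_gf_nonneg. pose proof return_gf_nonneg.
  pose proof (Rabs_triang_inv (other_mean * walk_gf) (- ((x i - other_mean) * return_gf))).
  rewrite Rabs_Ropp, !Rabs_mult in H1.
  replace (other_mean * walk_gf - - ((x i - other_mean) * return_gf))
    with (other_mean * walk_gf + (x i - other_mean) * return_gf) in H1 by ring.
  rewrite (Rabs_right walk_gf), (Rabs_right return_gf) in H1 by lra. lra.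
Qed.

Lemma walks_total_le t : (t <= T)%nat -> walks_total n q i t <= (INR n * q + INR T) ^ t.
Proof.
  induction t; intros Ht; [rewrite walks_total_0; simpl; lra|].
  pose proof (walks_total_S_le n q Hq01 i Hi t). pose proof (walks_total_nonneg n q i Hq01 t).
  assert (INR (S t) <= INR T) by (apply le_INR; lia).
  assert (0 <= INR n * q) by (pose proof (pos_INR n); nra). pose proof (pos_INR (S t)).
  simpl pow. eapply Rle_trans; [exact H|].
  apply Rmult_le_compat; try lra. apply IHt. lia.
Qed.

Lemma walk_gf_le : 1 <= p * (INR n * q + INR T) ->
  walk_gf <= INR (S T) * (p * (INR n * q + INR T)) ^ T.
Proof.
  intros Hb. unfold walk_gf. rewrite <- (rsum_const (S T)). apply rsum_le. intros t Ht.
  apply Rle_trans with (p ^ t * (INR n * q + INR T) ^ t).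
  - apply Rmult_le_compat_l; [apply pow_le; lra|]. apply walks_total_le. lia.
  - rewrite <- Rpow_mult_distr. apply Rle_pow; auto. lia.
Qed.

Lemma walks_total_ge t : (t <= T)%nat -> (T < n)%nat -> ((INR n - INR T) * q) ^ t <= walks_total n q i t.
Proof.
  intros Ht HT. assert (INR T < INR n) by (apply lt_INR; auto).
  induction t; [rewrite walks_total_0; simpl; lra|].
  pose proof (walks_total_S_ge n q Hq01 i Hi t). pose proof (walks_total_nonneg n q i Hq01 t).
  assert (INR (S t) <= INR T) by (apply le_INR; lia).
  simpl pow. eapply Rle_trans; [|exact H0].
  apply Rle_trans with ((INR n - INR T) * q * walks_total n q i t).
  - apply Rmult_le_compat_l; [nra|]. apply IHt. lia.
  - apply Rmult_le_compat_r; [auto|]. apply Rmult_le_compat_r; lra.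
Qed.

Lemma walk_gf_ge : (T < n)%nat -> (p * q * (INR n - INR T)) ^ T <= walk_gf.
Proof.
  intros HT. unfold walk_gf. apply Rle_trans with (p ^ T * walks_total n q i T).
  - replace (p * q * (INR n - INR T)) with (p * ((INR n - INR T) * q)) by ring.
    rewrite Rpow_mult_distr. apply Rmult_le_compat_l; [apply pow_le; lra|]. apply walks_total_ge; lia.
  - apply (rsum_last_le T (fun t => p ^ t * walks_total n q i t)). intros t _.
    pose proof (walks_total_nonneg n q i Hq01 t). pose proof (pow_le p t ltac:(lra)). nra.
Qed.

(* A walk returning to [i] at time [t + 1] is a walk of length [t] closed by one step;
   walks of length [t + 1] number at least [q (n - T)] times those of length [t]. *)
Lemma return_gf_le : (T < n)%nat -> return_gf <= 1 + walk_gf / (q * (INR n - INR T)).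
Proof.
  intros HT. assert (INR T < INR n) by (apply lt_INR; auto).
  assert (Hc : 0 < q * (INR n - INR T)) by (apply Rmult_lt_0_compat; lra).
  unfold return_gf, walk_gf, Rdiv. rewrite !rsum_Sl, !pow_O, walks_to_self_0, walks_total_0 by auto.
  rewrite Rmult_plus_distr_r, (Rmult_comm (rsum _ _)), <- rsum_scal.
  assert (0 <= 1 * 1 * / (q * (INR n - INR T))) by (pose proof (Rinv_0_lt_compat _ Hc); lra).
  enough (rsum T (fun t => p ^ S t * walks_to n q i (S t) i)
          <= rsum T (fun t => / (q * (INR n - INR T)) * (p ^ S t * walks_total n q i (S t)))) by lra.
  apply rsum_le. intros t Ht.
  rewrite (Rmult_comm (/ _) _), Rmult_assoc. apply Rmult_le_compat_l; [apply pow_le; lra|].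
  pose proof (walks_to_self_S_le n q Hq01 i Hi t). pose proof (walks_total_S_ge n q Hq01 i Hi t).
  pose proof (walks_total_nonneg n q i Hq01 t).
  assert (INR (S t) <= INR T) by (apply le_INR; lia).
  apply Rle_trans with (walks_total n q i t); auto.
  apply Rmult_le_reg_l with (q * (INR n - INR T)); auto.
  replace (q * (INR n - INR T) * (walks_total n q i (S t) * / (q * (INR n - INR T))))
    with (walks_total n q i (S t)) by (field; lra).
  assert (0 <= (INR T - INR (S t)) * (q * walks_total n q i t)) by (apply Rmult_le_pos; nra). nra.
Qed.

End FixedSize.

(** * Asymptotics *)

Lemma exp_le a b : a <= b -> exp a <= exp b.
Proof. intros [H|<-]; [left; apply exp_increasing; auto|lra]. Qed.

Lemma ln_le a b : 0 < a -> a <= b -> ln a <= ln b.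
Proof. intros H [H1|<-]; [left; apply ln_increasing; auto|lra]. Qed.

Lemma pow_exp_ln x T : 0 < x -> x ^ T = exp (INR T * ln x).
Proof. intros. rewrite <- ln_pow, exp_ln by auto using pow_lt. auto. Qed.

Lemma pow_1_plus_le_exp x T : 0 <= x -> (1 + x) ^ T <= exp (INR T * x).
Proof.
  intros Hx. apply Rle_trans with (exp x ^ T).
  - apply pow_incr. split; [lra|apply exp_ineq1_le].
  - rewrite pow_exp_ln, ln_exp by apply exp_pos. lra.
Qed.

Lemma bernoulli_ineq x T : 0 <= x <= 1 -> 1 - INR T * x <= (1 - x) ^ T.
Proof.
  intros Hx. induction T; [simpl; lra|]. rewrite S_INR. simpl.
  pose proof (pos_INR T). nra.
Qed.

Lemma exp_ge_sqr_div4 x : 0 <= x -> x * x / 4 <= exp x.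
Proof.
  intros Hx. replace x with (x / 2 + x / 2) at 3 by field. rewrite exp_plus.
  pose proof (exp_ineq1_le (x / 2)). nra.
Qed.

Lemma affine_mul_exp_neg_le a b c eps : 0 < a -> 0 < b -> 0 < c -> 0 < eps ->
  exists L0, forall L, L0 <= L -> (a * L + b) * exp (- (c * L)) <= eps.
Proof.
  intros Ha Hb Hc He. exists (Rmax 1 (4 * (a + b) / (c * c * eps))). intros L HL.
  assert (H1 : 1 <= L) by (eapply Rle_trans; [apply Rmax_l|eauto]).
  assert (H2 : 4 * (a + b) / (c * c * eps) <= L) by (eapply Rle_trans; [apply Rmax_r|eauto]).
  assert (Hcce : 0 < c * c * eps) by (repeat apply Rmult_lt_0_compat; auto).
  assert (H3 : 4 * (a + b) <= L * (c * c * eps)).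
  { unfold Rdiv in H2. apply Rmult_le_compat_r with (r := c * c * eps) in H2; [|lra].
    rewrite Rmult_assoc, Rinv_l, Rmult_1_r in H2 by lra. auto. }
  pose proof (exp_ge_sqr_div4 (c * L) ltac:(nra)). pose proof (exp_pos (c * L)).
  rewrite exp_Ropp. apply Rmult_le_reg_r with (exp (c * L)); auto.
  rewrite Rmult_assoc, Rinv_l, Rmult_1_r by lra. nra.
Qed.

Definition eventually (P : nat -> Prop) : Prop := exists N, forall n, (N <= n)%nat -> P n.

Lemma eventually_and P Q : eventually P -> eventually Q -> eventually (fun n => P n /\ Q n).
Proof.
  intros [N1 H1] [N2 H2]. exists (N1 + N2)%nat. intros n Hn. split; [apply H1|apply H2]; lia.
Qed.

Lemma eventually_mono (P Q : nat -> Prop) : eventually P -> (forall n, P n -> Q n) -> eventually Q.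
Proof. intros [N H] HPQ. exists N. auto. Qed.

Lemma eventually_ge m : eventually (fun n => (m <= n)%nat).
Proof. exists m. auto. Qed.

Lemma eventually_INR_ge A : eventually (fun n => A <= INR n).
Proof.
  destruct (INR_archimed 1 A) as [N HN]; [lra|]. exists N. intros n Hn.
  pose proof (le_INR _ _ Hn). lra.
Qed.

Lemma eventually_ln_ge A : eventually (fun n => A <= ln (INR n)).
Proof.
  apply (eventually_mono _ _ (eventually_INR_ge (exp A))).
  intros n Hn. rewrite <- (ln_exp A). apply ln_le; auto using exp_pos.
Qed.

Lemma Rabs_minus_le a b : Rabs (a - b) <= Rabs a + Rabs b.
Proof. pose proof (Rabs_triang a (- b)). rewrite Rabs_Ropp in H. auto. Qed.

Lemma Rabs_half_close w a : Rabs (w - a) <= Rabs a / 2 ->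
  Rabs a / 2 <= Rabs w <= 2 * Rabs a.
Proof. unfold Rabs; destruct (Rcase_abs (w - a)), (Rcase_abs a), (Rcase_abs w); lra. Qed.

(* Removing one fixed entry does not change the limit of the running mean. *)
Lemma other_mean_bounds y yinf i : Un_cv (ybar y) yinf -> yinf <> 0 ->
  eventually (fun n => Rabs yinf / 2 <= Rabs (other_mean n i (yvec y)) <= 2 * Rabs yinf).
Proof.
  intros Hy Hyinf. assert (Ha : 0 < Rabs yinf) by (apply Rabs_pos_lt; auto).
  set (Y := yvec y i).
  destruct (Hy (Rabs yinf / 8) ltac:(lra)) as [N1 HN1].
  destruct (eventually_INR_ge (1 + 8 * (2 * Rabs yinf + Rabs Y) / Rabs yinf)) as [N2 HN2].
  exists (N1 + N2 + 2)%nat. intros n Hn.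
  specialize (HN1 n ltac:(lia)). specialize (HN2 n ltac:(lia)). unfold R_dist, ybar in HN1.
  assert (Hn2 : 2 <= INR n) by (replace 2 with (INR 2) by (simpl; lra); apply le_INR; lia).
  set (u := rsum n (fun k => y (S k)) / INR n) in *.
  assert (Hmean : other_mean n i (yvec y) = u + (u - Y) / (INR n - 1)).
  { unfold other_mean, u, Y. change (rsum n (yvec y)) with (rsum n (fun k => y (S k))).
    field. lra. }
  assert (Hu : Rabs u <= 2 * Rabs yinf).
  { pose proof (Rabs_triang (u - yinf) yinf). replace (u - yinf + yinf) with u in H by ring. lra. }
  assert (Hshift : Rabs ((u - Y) / (INR n - 1)) <= Rabs yinf / 8).
  { unfold Rdiv. rewrite Rabs_mult, Rabs_inv, (Rabs_right (INR n - 1)) by lra.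
    pose proof (Rabs_triang u (- Y)). rewrite Rabs_Ropp in H.
    apply Rmult_le_reg_r with (INR n - 1); [lra|]. rewrite Rmult_assoc, Rinv_l by lra.
    assert (8 * (2 * Rabs yinf + Rabs Y) <= (INR n - 1) * Rabs yinf); [|unfold Rminus at 1; lra].
    apply Rmult_le_reg_r with (/ Rabs yinf); [apply Rinv_0_lt_compat; auto|].
    replace ((INR n - 1) * Rabs yinf * / Rabs yinf) with (INR n - 1) by (field; lra).
    unfold Rdiv in HN2. lra. }
  apply Rabs_half_close. rewrite Hmean.
  pose proof (Rabs_triang (u - yinf) ((u - Y) / (INR n - 1))).
  replace (u - yinf + (u - Y) / (INR n - 1)) with (u + (u - Y) / (INR n - 1) - yinf) in H by ring.
  lra.
Qed.

Lemma density_bounds n q : (2 <= n)%nat -> ln (INR n) <= q * INR n <= sqrt (INR n) ->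
  0 < ln (INR n) /\ 0 < q <= 1.
Proof.
  intros Hn [H1 H2].
  assert (Hn2 : 2 <= INR n) by (replace 2 with (INR 2) by (simpl; lra); apply le_INR; lia).
  assert (HL : 0 < ln (INR n)) by (rewrite <- ln_1; apply ln_increasing; lra).
  pose proof (sqrt_sqrt (INR n) ltac:(lra)). pose proof (sqrt_pos (INR n)).
  assert (Hq0 : 0 < q) by nra.
  assert (q * INR n * (q * INR n) <= INR n) by nra.
  assert (q * q * INR n <= 1) by nra.
  repeat split; nra.
Qed.

Lemma ln_pos_gt_1 r : 0 < ln r -> 1 < r.
Proof.
  intros H. destruct (Rlt_or_le 0 r) as [Hr|Hr].
  - apply ln_lt_inv; auto; [lra|]. rewrite ln_1. auto.
  - unfold ln in H. destruct (Rlt_dec 0 r); [lra|]. lra.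
Qed.

Lemma pow_subcritical_le r s L d l T : 0 < l <= ln r -> 0 <= s -> 0 < d -> 0 <= L ->
  INR T * ln r <= (1 - d) * L -> s <= d * l / 2 ->
  (r * (1 + s)) ^ T <= exp (- (d / 2 * L)) * exp L.
Proof.
  intros [Hl Hlr] Hs Hd HL HTr Hsl. pose proof (pos_INR T).
  assert (Hr : 1 < r) by (apply ln_pos_gt_1; lra).
  assert (HTL : INR T * l <= L).
  { assert (INR T * l <= INR T * ln r) by (apply Rmult_le_compat_l; lra). nra. }
  rewrite <- exp_plus, Rpow_mult_distr, pow_exp_ln by lra.
  apply Rle_trans with (exp ((1 - d) * L) * exp (INR T * s)).
  - apply Rmult_le_compat; [left; apply exp_pos|apply pow_le; lra|apply exp_le; lra|].
    apply pow_1_plus_le_exp; auto.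
  - rewrite <- exp_plus. apply exp_le.
    assert (INR T * s <= INR T * (d * l / 2)) by (apply Rmult_le_compat_l; auto). nra.
Qed.

Lemma Rabs_E_Gnq_CC_subcritical n i T q p x d l : (2 <= n)%nat -> (i < n)%nat ->
  0 < q <= 1 -> 0 < p -> 0 < d -> 0 < ln (INR n) -> 0 < l <= ln (INR n * p * q) ->
  INR T * ln (INR n * p * q) <= (1 - d) * ln (INR n) -> INR T <= d * l / 2 * (q * INR n) ->
  Rabs (E_Gnq n q (fun A => CC n A p T x i)) <=
    (Rabs (x i - other_mean n i x) + Rabs (other_mean n i x))
    * ((ln (INR n) / l + 1) * exp (- (d / 2 * ln (INR n)))) * INR n.
Proof.
  intros Hn Hi Hq Hp Hd HL [Hl Hlr] HTr HTq.
  set (L := ln (INR n)) in *. set (r := INR n * p * q) in *.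
  assert (Hn2 : 2 <= INR n) by (replace 2 with (INR 2) by (simpl; lra); apply le_INR; lia).
  assert (Hnq : 0 < q * INR n) by nra. pose proof (pos_INR T).
  set (s := INR T / (q * INR n)).
  assert (Hs : 0 <= s <= d * l / 2).
  { unfold s. split; [apply Rmult_le_pos; auto; left; apply Rinv_0_lt_compat; auto|].
    apply Rmult_le_reg_r with (q * INR n); auto. unfold Rdiv at 1.
    rewrite Rmult_assoc, Rinv_l, Rmult_1_r by lra. auto. }
  assert (Hbase : p * (INR n * q + INR T) = r * (1 + s)) by (unfold r, s; field; lra).
  assert (Hr : 1 < r) by (apply ln_pos_gt_1; lra).
  assert (HTL : INR T <= L / l).
  { apply Rmult_le_reg_r with l; auto. unfold Rdiv. rewrite Rmult_assoc, Rinv_l, Rmult_1_r by lra.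
    assert (INR T * l <= INR T * ln r) by (apply Rmult_le_compat_l; lra). nra. }
  assert (Hwalks : walk_gf n i T q p <= (L / l + 1) * (exp (- (d / 2 * L)) * INR n)).
  { eapply Rle_trans; [apply walk_gf_le; auto; rewrite Hbase; nra|].
    rewrite S_INR, Hbase. apply Rmult_le_compat; [lra|apply pow_le; nra|lra|].
    unfold L. rewrite <- (exp_ln (INR n)) at 2 by lra.
    apply (pow_subcritical_le r s L d l T); auto; lra. }
  eapply Rle_trans; [apply Rabs_E_Gnq_CC_le; auto|].
  rewrite !Rmult_assoc. apply Rmult_le_compat_l; [pose proof (Rabs_pos (x i - other_mean n i x));
    pose proof (Rabs_pos (other_mean n i x)); lra|]. lra.
Qed.

Lemma pow_supercritical_ge r m T : 1 < r -> 1 <= m -> ln m <= INR T * ln r ->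
  INR T * INR T <= m / 4 -> 3 / 4 * m <= (r * (1 - INR T / m)) ^ T.
Proof.
  intros Hr Hm HTr HTT. pose proof (pos_INR T).
  assert (HTm : INR T <= m) by nra.
  assert (Hx : 0 <= INR T / m <= 1).
  { split; [apply Rmult_le_pos; auto; left; apply Rinv_0_lt_compat; lra|].
    apply Rmult_le_reg_r with m; [lra|]. unfold Rdiv. rewrite Rmult_assoc, Rinv_l by lra. lra. }
  assert (Hpow : m <= r ^ T).
  { rewrite pow_exp_ln, <- (exp_ln m) at 1 by lra. apply exp_le. auto. }
  assert (Hsqr : INR T * (INR T / m) <= 1 / 4).
  { apply Rmult_le_reg_r with m; [lra|].
    replace (INR T * (INR T / m) * m) with (INR T * INR T) by (field; lra). lra. }
  pose proof (bernoulli_ineq (INR T / m) T Hx).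
  rewrite Rpow_mult_distr. replace (3 / 4 * m) with (m * (3 / 4)) by ring.
  apply Rmult_le_compat; lra.
Qed.

Lemma Rabs_E_Gnq_CC_supercritical n i T q p x c : (2 <= n)%nat -> (i < n)%nat ->
  0 < q <= 1 -> 0 < p -> 0 < ln (INR n) <= q * INR n -> q * INR n <= sqrt (INR n) ->
  INR T <= q * INR n / 2 -> 1 < INR n * p * q -> ln (INR n) <= INR T * ln (INR n * p * q) ->
  0 <= c -> 2 * Rabs (x i - other_mean n i x) <= (Rabs (other_mean n i x) - c) * ln (INR n) ->
  c * (3 / 4 * INR n) - Rabs (x i - other_mean n i x) <= Rabs (E_Gnq n q (fun A => CC n A p T x i)).
Proof.
  intros Hn Hi Hq Hp [HL HLq] Hqs HTq Hr HTr Hc HK.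
  set (L := ln (INR n)) in *. set (K := Rabs (x i - other_mean n i x)) in *.
  set (mu := Rabs (other_mean n i x)) in *.
  assert (Hn2 : 2 <= INR n) by (replace 2 with (INR 2) by (simpl; lra); apply le_INR; lia).
  pose proof (pos_INR T). pose proof (Rabs_pos (x i - other_mean n i x)).
  pose proof (sqrt_sqrt (INR n) ltac:(lra)). pose proof (sqrt_pos (INR n)).
  assert (HTT : INR T * INR T <= INR n / 4) by nra.
  assert (HTn : INR T <= INR n / 2) by nra.
  assert (HTlt : (T < n)%nat) by (apply INR_lt; lra).
  assert (Hwalks : 3 / 4 * INR n <= walk_gf n i T q p).
  { eapply Rle_trans; [apply (pow_supercritical_ge (INR n * p * q) (INR n) T); auto; lra|].
    replace (INR n * p * q * (1 - INR T / INR n)) with (p * q * (INR n - INR T)) by (field; lra).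
    apply walk_gf_ge; auto. }
  assert (Hgap : L / 2 <= q * (INR n - INR T)) by nra.
  assert (Hreturn : K * return_gf n i T q p <= K + (mu - c) * walk_gf n i T q p).
  { assert (0 <= walk_gf n i T q p) by (apply walk_gf_nonneg; auto).
    eapply Rle_trans; [apply Rmult_le_compat_l; [auto|apply return_gf_le; auto]|].
    unfold Rdiv. rewrite Rmult_plus_distr_l, Rmult_1_r, (Rmult_comm (walk_gf _ _ _ _ _)), <- Rmult_assoc.
    apply Rplus_le_compat_l, Rmult_le_compat_r; auto.
    apply Rmult_le_reg_r with (q * (INR n - INR T)); [lra|].
    rewrite Rmult_assoc, Rinv_l, Rmult_1_r by lra.
    assert (0 <= mu - c).
    { destruct (Rle_lt_dec 0 (mu - c)) as [|Hneg]; auto. assert (0 <= K) by apply Rabs_pos. nra. }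
    assert ((mu - c) * (L / 2) <= (mu - c) * (q * (INR n - INR T))) by (apply Rmult_le_compat_l; lra).
    lra. }
  pose proof (Rabs_E_Gnq_CC_ge n i T q p x Hn Hi Hq Hp). fold K mu in H3.
  assert (c * (3 / 4 * INR n) <= c * walk_gf n i T q p) by (apply Rmult_le_compat_l; auto).
  lra.
Qed.

Lemma Rmult_le_of_le_div a b c : 0 < c -> a <= b / c -> a * c <= b.
Proof.
  intros Hc H. apply Rmult_le_compat_r with (r := c) in H; [|lra].
  unfold Rdiv in H. rewrite Rmult_assoc, Rinv_l, Rmult_1_r in H by lra. auto.
Qed.

Lemma Rle_mul_of_div_le a b c : 0 < c -> b / c <= a -> b <= a * c.
Proof.
  intros Hc H. apply Rmult_le_compat_r with (r := c) in H; [|lra].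
  unfold Rdiv in H. rewrite Rmult_assoc, Rinv_l, Rmult_1_r in H by lra. auto.
Qed.

Section Asymptotics.
Variables (y : nat -> R) (yinf : R) (q p : nat -> R) (T : nat -> nat) (i : nat) (e0 : R).
Hypotheses (Hy : Un_cv (ybar y) yinf) (Hyinf : yinf <> 0)
  (Hp : forall n, (1 <= n)%nat -> 0 < p n)
  (Hq : forall n, (1 <= n)%nat -> ln (INR n) <= q n * INR n <= sqrt (INR n))
  (HTo : forall eps, 0 < eps -> eventually (fun n => INR (T n) <= eps * (q n * INR n)))
  (He0 : 0 < e0) (Hr : forall n, (1 <= n)%nat -> INR n * p n * q n >= 1 + e0)
  (Hi : (1 <= i)%nat).

Let Ei (n : nat) : R := E_Gnq n (q n) (fun A => CC n A (p n) (T n) (yvec y) (i - 1)%nat).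
Let Y : R := yvec y (i - 1).

Lemma expected_CC_subcritical d : 0 < d ->
  eventually (fun n => INR (T n) <= (1 - d) * ln (INR n) / ln (INR n * p n * q n)) ->
  forall eps, 0 < eps -> eventually (fun n => Rabs (Ei n) <= eps * INR n).
Proof.
  intros Hd HdT eps Heps. assert (Ha : 0 < Rabs yinf) by (apply Rabs_pos_lt; auto).
  set (l := ln (1 + e0)). assert (Hl : 0 < l) by (unfold l; rewrite <- ln_1; apply ln_increasing; lra).
  set (M := Rabs Y + 4 * Rabs yinf). assert (HM : 0 < M) by (pose proof (Rabs_pos Y); unfold M; lra).
  destruct (affine_mul_exp_neg_le (M / l) M (d / 2) eps) as [L0 HL0];
    try (unfold Rdiv; auto using Rmult_lt_0_compat, Rinv_0_lt_compat; lra).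
  pose proof (eventually_and _ _ (other_mean_bounds y yinf (i - 1) Hy Hyinf)
    (eventually_and _ _ (HTo (d * l / 2) ltac:(nra))
      (eventually_and _ _ HdT (eventually_and _ _ (eventually_ln_ge L0) (eventually_ge (S i)))))) as Hev.
  apply (eventually_mono _ _ Hev). intros n [[_ Hmu] [HTq [HTr [HLn Hn]]]].
  destruct (density_bounds n (q n) ltac:(lia) (Hq n ltac:(lia))) as [HL Hq01].
  specialize (Hr n ltac:(lia)).
  assert (Hlr : l <= ln (INR n * p n * q n)) by (apply ln_le; lra).
  eapply Rle_trans.
  { apply (Rabs_E_Gnq_CC_subcritical n (i - 1) (T n) (q n) (p n) (yvec y) d l ltac:(lia) ltac:(lia)
      Hq01 (Hp n ltac:(lia)) Hd HL (conj Hl Hlr)); [|lra].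
    apply Rmult_le_of_le_div; lra. }
  apply Rmult_le_compat_r; [apply pos_INR|]. fold Y.
  pose proof (Rabs_minus_le Y (other_mean n (i - 1) (yvec y))). specialize (HL0 _ HLn).
  pose proof (exp_pos (- (d / 2 * ln (INR n)))).
  assert (0 <= ln (INR n) / l + 1) by (unfold Rdiv; pose proof (Rinv_0_lt_compat l Hl); nra).
  eapply Rle_trans; [|exact HL0].
  replace (M / l * ln (INR n) + M) with (M * (ln (INR n) / l + 1)) by (field; lra).
  rewrite !Rmult_assoc. apply Rmult_le_compat_r; [nra|]. unfold M. lra.
Qed.

Lemma expected_CC_supercritical d : 0 < d ->
  eventually (fun n => INR (T n) >= (1 + d) * ln (INR n) / ln (INR n * p n * q n)) ->
  exists c, 0 < c /\ eventually (fun n => Rabs (Ei n) >= c * INR n).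
Proof.
  intros Hd HdT. assert (Ha : 0 < Rabs yinf) by (apply Rabs_pos_lt; auto).
  exists (Rabs yinf / 16). split; [lra|].
  set (M := Rabs Y + 2 * Rabs yinf). assert (HM : 0 < M) by (pose proof (Rabs_pos Y); unfold M; lra).
  pose proof (eventually_and _ _ (other_mean_bounds y yinf (i - 1) Hy Hyinf)
    (eventually_and _ _ (HTo (1 / 2) ltac:(lra))
      (eventually_and _ _ HdT (eventually_and _ _ (eventually_ln_ge (8 * M / Rabs yinf))
        (eventually_and _ _ (eventually_INR_ge (8 * M / Rabs yinf)) (eventually_ge (S i))))))) as Hev.
  apply (eventually_mono _ _ Hev). intros n [[Hmu1 Hmu2] [HTq [HTr [HLn [HnM Hn]]]]].
  destruct (density_bounds n (q n) ltac:(lia) (Hq n ltac:(lia))) as [HL Hq01].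
  pose proof (Hq n ltac:(lia)) as [HLq Hqs]. specialize (Hr n ltac:(lia)).
  assert (Hlr : 0 < ln (INR n * p n * q n)) by (rewrite <- ln_1; apply ln_increasing; lra).
  assert (HLT : ln (INR n) <= INR (T n) * ln (INR n * p n * q n)).
  { apply Rge_le, Rle_mul_of_div_le in HTr; auto. pose proof (pos_INR (T n)). nra. }
  pose proof (Rabs_minus_le Y (other_mean n (i - 1) (yvec y))).
  assert (HK : 2 * Rabs (Y - other_mean n (i - 1) (yvec y))
               <= (Rabs (other_mean n (i - 1) (yvec y)) - Rabs yinf / 4) * ln (INR n)).
  { apply Rle_mul_of_div_le in HLn; [|auto]. unfold M in *. nra. }
  pose proof (Rabs_E_Gnq_CC_supercritical n (i - 1) (T n) (q n) (p n) (yvec y) (Rabs yinf / 4)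
    ltac:(lia) ltac:(lia) Hq01 (Hp n ltac:(lia)) (conj HL HLq) Hqs ltac:(lra) ltac:(lra) HLT
    ltac:(lra) HK).
  apply Rle_mul_of_div_le in HnM; [|auto]. unfold Ei, M, Y in *. lra.
Qed.

End Asymptotics.

Theorem theorem2
  (y : nat -> R) (yinf : R)
  (q p : nat -> R) (T : nat -> nat) (i : nat)
  (Hy : Un_cv (ybar y) yinf) (Hyinf : yinf <> 0)
  (Hp : forall n, (1 <= n)%nat -> 0 < p n)
  (HT1 : forall n, (1 <= n)%nat -> (1 <= T n)%nat)
  (Hq : forall n, (1 <= n)%nat -> ln (INR n) <= q n * INR n <= sqrt (INR n))
  (HTo : forall eps, 0 < eps -> exists N, forall n, (N <= n)%nat ->
           INR (T n) <= eps * (q n * INR n))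
  (Heps : exists eps, 0 < eps /\ forall n, (1 <= n)%nat ->
           INR n * p n * q n >= 1 + eps)
  (Hi : (1 <= i)%nat) :
  ((exists delta, 0 < delta /\ exists N, forall n, (N <= n)%nat ->
      INR (T n) <= (1 - delta) * ln (INR n) / ln (INR n * p n * q n)) ->
   forall eps, 0 < eps -> exists N, forall n, (N <= n)%nat ->
      Rabs (E_Gnq n (q n) (fun A => CC n A (p n) (T n) (yvec y) (i - 1)%nat))
        <= eps * INR n)
  /\
  ((exists delta, 0 < delta /\ exists N, forall n, (N <= n)%nat ->
      INR (T n) >= (1 + delta) * ln (INR n) / ln (INR n * p n * q n)) ->
   exists c, 0 < c /\ exists N, forall n, (N <= n)%nat ->
      Rabs (E_Gnq n (q n) (fun A => CC n A (p n) (T n) (yvec y) (i - 1)%nat))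
        >= c * INR n).
Proof.
  destruct Heps as [e0 [He0 Hr]].
  split; intros [d [Hd HdT]].
  - exact (expected_CC_subcritical y yinf q p T i e0 Hy Hyinf Hp Hq HTo He0 Hr Hi d Hd HdT).
  - exact (expected_CC_supercritical y yinf q p T i e0 Hy Hyinf Hp Hq HTo He0 Hr Hi d Hd HdT).
Qed.
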